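(* Let $\mathbb{K}$ be a field and let $\mathcal F=\{f_n(q)\}_{n=1}^\infty$ be a sequence of polynomials in $\mathbb{K}[q]$ satisfying $f_{mn}(q)=f_m(q)f_n(q^m)$ for all $m,n\in\mathbb N$. Suppose $\mathrm{supp}(\mathcal F)=S(P)$ for an infinite set $P$ of prime numbers, and $f_p(0)=1$ for all $p\in P$. Then there exists a formal power series $F_P(q)\in\mathbb{K}[[q]]$ such that \[ F_P(q)=\lim_{\substack{p\to\infty\\ p\in P}}f_p(q), \] i.e. for every $N$ there is $p_0$ such that $f_p(q)\equiv F_P(q)\pmod{q^N}$ for all $p\in P$ with $p\ge p_0$.
   Context: $\mathbb N=\{1,2,3,\dots\}$. $\mathrm{supp}(\mathcal F)=\{n\in\mathbb N: f_n(q)\ne0\}$. For a set $P$ of primes, $S(P)$ is the multiplicative semigroup of positive integers generated by $P$ (all finite products of elements of $P$, including $1$). For power series $g,h$, $g\equiv h\pmod{q^N}$ means their coefficients of $q^0,\dots,q^{N-1}$ agree. *)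

From mathcomp Require Import all_boot all_order all_algebra.
Set Implicit Arguments. Unset Strict Implicit. Unset Printing Implicit Defensive.
Import GRing.Theory.
Local Open Scope ring_scope.

Definition in_semigroup (P : nat -> Prop) (n : nat) : Prop :=
  exists s : seq nat, (forall p, p \in s -> P p) /\ n = (\prod_(p <- s) p)%N.

Definition fps (K : fieldType) := nat -> K.

Definition poly_fps_congr (K : fieldType) (N : nat) (g : {poly K}) (h : fps K) :=
  forall i, (i < N)%N -> g`_i = h i.

From mathcomp Require Import all_boot all_order all_algebra.
From Stdlib Require Import ClassicalEpsilon.
Import GRing.Theory.
Local Open Scope ring_scope.

(** For [p, q] in [P] exceeding [i], expanding [f (p * q)] in both orders
   gives [f p * (f q \Po 'X^p) = f q * (f p \Po 'X^q)].  As [f p] and [f q]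
   have constant term [1], both compositions are [1] modulo [X^(i+1)], so the
   [i]-th coefficients of [f p] and [f q] agree.  Hence the [i]-th coefficient
   of [f p] is eventually constant along [P], and these constants form [F_P]. *)

Lemma coef_mul_comp_Xn_low {R : comNzRingType} (a : {poly R}) {g : {poly R}}
    {m i : nat} :
  g.[0] = 1 -> (i < m)%N -> (a * (g \Po 'X^m))`_i = a`_i.
Proof.
move=> g0 lt_im.
have /factor_theorem [h def_g1] : root (g - 1) 0.
  by rewrite rootE hornerD hornerN g0 hornerC subrr.
have -> : g = 1 + h * 'X by rewrite -[g](subrK 1) def_g1 subr0 addrC.
rewrite comp_polyD comp_polyC comp_polyM comp_polyX mulrDr mulr1 coefD.
by rewrite mulrC -mulrA mulrC -mulrA coefXnM lt_im addr0.
Qed.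

Lemma coef_multiplicative_agree {R : comNzRingType} {f : nat -> {poly R}}
    {p q i : nat} :
  (forall m n, (0 < m)%N -> (0 < n)%N -> f (m * n)%N = f m * (f n \Po 'X^m)) ->
  (f p).[0] = 1 -> (f q).[0] = 1 -> (i < p)%N -> (i < q)%N ->
  (f p)`_i = (f q)`_i.
Proof.
move=> f_mul fp0 fq0 lt_ip lt_iq.
have p_gt0 : (0 < p)%N by apply: leq_ltn_trans lt_ip.
have q_gt0 : (0 < q)%N by apply: leq_ltn_trans lt_iq.
rewrite -(coef_mul_comp_Xn_low (f p) fq0 lt_ip).
rewrite -(coef_mul_comp_Xn_low (f q) fp0 lt_iq).
by rewrite -!f_mul // mulnC.
Qed.

Theorem mainTheorem5 (K : fieldType) (f : nat -> {poly K}) (P : nat -> Prop)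
  (Hmult : forall m n : nat, (0 < m)%N -> (0 < n)%N ->
     f (m * n)%N = f m * (f n \Po 'X^m))
  (Hprime : forall p, P p -> prime p)
  (Hinf : forall m : nat, exists p, P p /\ (m < p)%N)
  (Hsupp : forall n : nat, (0 < n)%N -> (f n != 0 <-> in_semigroup P n))
  (H0 : forall p, P p -> (f p).[0] = 1) :
  exists F : fps K, forall N : nat, exists p0 : nat,
    forall p, P p -> (p0 <= p)%N -> poly_fps_congr N (f p) F.
Proof.
pose big_prime i := proj1_sig (constructive_indefinite_description _ (Hinf i)).
have big_primeP i : P (big_prime i) /\ (i < big_prime i)%N.
  exact: proj2_sig (constructive_indefinite_description _ (Hinf i)).
exists (fun i => (f (big_prime i))`_i) => N; exists N => p Pp le_Np i lt_iN.
have [P_big lt_i_big] := big_primeP i.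
apply: (coef_multiplicative_agree Hmult (H0 p Pp) (H0 _ P_big)) lt_i_big.
exact: leq_trans le_Np.
Qed.
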